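(* Let $\lambda>0$, let $\mathbf r_\lambda\in\mathfrak R$ be any point at which $f+\lambda g$ attains its minimum over $\mathfrak R$, and let $\mathbf r_\lambda(t)$, $t\ge0$, be the uniformly rotating trajectory generated by it (defined in the context). Then $f(\mathbf r_\lambda(t))=f_\lambda$ and $g(\mathbf r_\lambda(t))=g_\lambda$ are constant in $t$ and $$f_\lambda=\frac{C(\mathbf m)}{\sqrt{g_\lambda}}.$$
   Context: Fix $N\ge 2$, masses $\mathbf m=(m_1,\dots,m_N)$, $m_i>0$, and $\gamma>0$. Planar configuration space $\mathfrak R=\{\mathbf r=(\mathbf r_1,\dots,\mathbf r_N)\in(\mathbb R^2)^N:\ \mathbf r_i\neq\mathbf r_j \text{ for } i\neq j\}$; $f(\mathbf r)=\sum_{i<j}\frac{\gamma m_im_j}{|\mathbf r_j-\mathbf r_i|}$, $g(\mathbf r)=\sum_i m_i|\mathbf r_i|^2$. Let $C(\mathbf m)=\min\{f(\mathbf r):\mathbf r\in\mathfrak R,\ g(\mathbf r)=1\}$, so that $\min\{f(\mathbf r): g(\mathbf r)=g\}=C(\mathbf m)/\sqrt g$ for all $g>0$. For $\lambda>0$ and a minimizer $\mathbf r_\lambda=(\mathbf r_{1\lambda},\dots,\mathbf r_{N\lambda})$ of $f+\lambda g$ on $\mathfrak R$, writing $\mathbf r_{i\lambda}=|\mathbf r_{i\lambda}|(\cos\varphi_{i\lambda},\sin\varphi_{i\lambda})$ and $\omega=\sqrt{2\lambda}$, the generated trajectory is $\mathbf r_\lambda(t)=(\mathbf r_{1\lambda}(t),\dots,\mathbf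 r_{N\lambda}(t))$ with $\mathbf r_{i\lambda}(t)=|\mathbf r_{i\lambda}|(\cos(\varphi_{i\lambda}+\omega t),\sin(\varphi_{i\lambda}+\omega t))$; it solves $m_i\ddot{\mathbf r}_i=\sum_{j\ne i}\gamma m_im_j(\mathbf r_j-\mathbf r_i)/|\mathbf r_j-\mathbf r_i|^3$. *)

From mathcomp Require Import all_boot all_order all_algebra.
From mathcomp Require Import all_classical all_reals all_analysis.
Set Implicit Arguments. Unset Strict Implicit. Unset Printing Implicit Defensive.
Import Order.TTheory GRing.Theory Num.Theory.
Local Open Scope ring_scope.
Local Open Scope classical_set_scope.

Section Defs.
Variable R : realType.

Definition nrm2 (a : R * R) : R := Num.sqrt (a.1 ^+ 2 + a.2 ^+ 2).
Definition dist2 (a b : R * R) : R := nrm2 (b.1 - a.1, b.2 - a.2).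

Definition config (N : nat) (r : 'I_N -> R * R) : Prop :=
  forall i j : 'I_N, i != j -> r i <> r j.

Definition fpot (N : nat) (m : 'I_N -> R) (gamma : R) (r : 'I_N -> R * R) : R :=
  \sum_(i < N) \sum_(j < N | (i < j)%N) gamma * m i * m j / dist2 (r i) (r j).

Definition gmom (N : nat) (m : 'I_N -> R) (r : 'I_N -> R * R) : R :=
  \sum_(i < N) m i * nrm2 (r i) ^+ 2.

(* C(m) = min { f(r) : r in frak R, g(r) = 1 } (taken as the infimum) *)
Definition Cmin (N : nat) (m : 'I_N -> R) (gamma : R) : R :=
  inf [set fpot m gamma r | r in [set r | config r /\ gmom m r = 1]].

Definition traj (N : nat) (r : 'I_N -> R * R) (phi : 'I_N -> R) (omega t : R)
  : 'I_N -> R * R :=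
  fun i => (nrm2 (r i) * cos (phi i + omega * t), nrm2 (r i) * sin (phi i + omega * t)).

End Defs.

From mathcomp Require Import all_boot all_order all_algebra.
From mathcomp Require Import all_classical all_reals all_analysis.
From mathcomp Require Import ring.
Set Implicit Arguments. Unset Strict Implicit. Unset Printing Implicit Defensive.
Import Order.TTheory GRing.Theory Num.Theory.
Local Open Scope ring_scope.

(* The trajectory is the minimiser rotated rigidly by the angle omega t, and
   f and g only see distances to each other and to the origin, so they are
   constant along it.  For the value of f: f is homogeneous of degree -1 and g
   of degree 2, so rescaling any configuration of the unit level set of g onto
   the level set {g = g_lambda} multiplies f by 1/sqrt g_lambda; on that level
   set f + lambda g differs from f by a constant, so r_lambda minimises f there
   and sqrt g_lambda * f_lambda is the minimum C(m) of f on {g = 1}. *)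

Section PlaneGeometry.
Variable R : realType.

Definition rotate (th : R) (a : R * R) : R * R :=
  (a.1 * cos th - a.2 * sin th, a.1 * sin th + a.2 * cos th).

Definition scale (c : R) (a : R * R) : R * R := (c * a.1, c * a.2).

Lemma nrm2_rotate th a : nrm2 (rotate th a) = nrm2 a.
Proof.
rewrite /nrm2 /rotate /=; congr Num.sqrt.
have -> : (a.1 * cos th - a.2 * sin th) ^+ 2 + (a.1 * sin th + a.2 * cos th) ^+ 2
        = (a.1 ^+ 2 + a.2 ^+ 2) * (cos th ^+ 2 + sin th ^+ 2) by ring.
by rewrite cos2Dsin2 mulr1.
Qed.

Lemma dist2_rotate th a b : dist2 (rotate th a) (rotate th b) = dist2 a b.
Proof.
rewrite /dist2 -(nrm2_rotate th (b.1 - a.1, b.2 - a.2)) /rotate /=.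
by congr (nrm2 (_, _)); ring.
Qed.

Lemma nrm2_scale c a : 0 <= c -> nrm2 (scale c a) = c * nrm2 a.
Proof.
move=> c_ge0; rewrite /nrm2 /scale /= !exprMn -mulrDr sqrtrM ?sqr_ge0 //.
by rewrite sqrtr_sqr ger0_norm.
Qed.

Lemma dist2_scale c a b : 0 <= c -> dist2 (scale c a) (scale c b) = c * dist2 a b.
Proof.
move=> c_ge0; rewrite /dist2 -nrm2_scale // /scale /=.
by congr (nrm2 (_, _)); ring.
Qed.

Lemma nrm2_eq0 (a : R * R) : nrm2 a = 0 -> a = (0, 0).
Proof.
move/eqP; rewrite sqrtr_eq0 => a_le0.
have /eqP : a.1 ^+ 2 + a.2 ^+ 2 = 0 by apply/eqP; rewrite eq_le a_le0 addr_ge0 ?sqr_ge0.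
rewrite paddr_eq0 ?sqr_ge0 // !sqrf_eq0 => /andP[/eqP a1 /eqP a2].
by case: a a1 a2 {a_le0} => /= ? ? -> ->.
Qed.

End PlaneGeometry.

Section Configurations.
Variables (R : realType) (N : nat) (m : 'I_N -> R) (gamma : R).
Implicit Types (r : 'I_N -> R * R) (c th : R).

Lemma fpot_rotate th r : fpot m gamma (rotate th \o r) = fpot m gamma r.
Proof. by apply: eq_bigr => i _; apply: eq_bigr => j _; rewrite /= dist2_rotate. Qed.

Lemma gmom_rotate th r : gmom m (rotate th \o r) = gmom m r.
Proof. by apply: eq_bigr => i _; rewrite /= nrm2_rotate. Qed.

Lemma fpot_scale c r : 0 < c -> fpot m gamma (scale c \o r) = c^-1 * fpot m gamma r.
Proof.
move=> c_gt0; rewrite /fpot mulr_sumr; apply: eq_bigr => i _.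
rewrite mulr_sumr; apply: eq_bigr => j _.
by rewrite /= dist2_scale ?ltW // invfM; ring.
Qed.

Lemma gmom_scale c r : 0 <= c -> gmom m (scale c \o r) = c ^+ 2 * gmom m r.
Proof.
move=> c_ge0; rewrite /gmom mulr_sumr; apply: eq_bigr => i _.
by rewrite /= nrm2_scale //; ring.
Qed.

Lemma config_scale c r : c != 0 -> config r -> config (scale c \o r).
Proof.
move=> c_neq0 r_config i j ij [e1 e2]; apply: (r_config i j ij).
by rewrite [r i]surjective_pairing [r j]surjective_pairing (mulfI c_neq0 e1) (mulfI c_neq0 e2).
Qed.

Lemma gmom_gt0 r : (2 <= N)%N -> (forall i, 0 < m i) -> config r -> 0 < gmom m r.
Proof.
move=> N_ge2 m_gt0 r_config.
have terms_ge0 i : 0 <= m i * nrm2 (r i) ^+ 2 by rewrite mulr_ge0 ?sqr_ge0 ?ltW.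
rewrite lt0r sumr_ge0 // andbT; apply/negP => /eqP /psumr_eq0P r_zero.
have r_origin i : r i = (0, 0).
  apply: nrm2_eq0; have /eqP := r_zero (fun j _ => terms_ge0 j) i isT.
  by rewrite mulf_eq0 gt_eqF //= sqrf_eq0 => /eqP.
have ord0_neq1 : Ordinal (ltnW N_ge2) != Ordinal N_ge2 by [].
by apply: (r_config _ _ ord0_neq1); rewrite !r_origin.
Qed.

Lemma traj_rotate r phi omega t :
  (forall i, r i = (nrm2 (r i) * cos (phi i), nrm2 (r i) * sin (phi i))) ->
  traj r phi omega t = rotate (omega * t) \o r.
Proof.
move=> r_polar; apply: funext => i; rewrite /traj /= [in RHS]r_polar /rotate /=.
by rewrite cosD sinD; congr pair; ring.
Qed.

End Configurations.

Lemma inf_attained (R : realType) (E : set R) x : E x -> lbound E x -> inf E = x.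
Proof.
move=> Ex x_lb; apply/eqP; rewrite eq_le lb_le_inf ?andbT //; last by exists x.
by apply: ge_inf => //; exists x.
Qed.

Lemma Cmin_level_minimizer (R : realType) (N : nat) (m : 'I_N -> R) (gamma : R)
    (r : 'I_N -> R * R) :
  config r -> 0 < gmom m r ->
  (forall r', config r' -> gmom m r' = gmom m r -> fpot m gamma r <= fpot m gamma r') ->
  Cmin m gamma = Num.sqrt (gmom m r) * fpot m gamma r.
Proof.
move=> r_config g_gt0 r_min; set s := Num.sqrt (gmom m r).
have s_gt0 : 0 < s by rewrite sqrtr_gt0.
have s2 : s ^+ 2 = gmom m r by rewrite sqr_sqrtr ?ltW.
apply: inf_attained.
  exists (scale s^-1 \o r); last by rewrite fpot_scale ?invr_gt0 // invrK.
  split; first by apply: config_scale; rewrite // invr_eq0 gt_eqF.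
  by rewrite gmom_scale ?invr_ge0 ?ltW // exprVn s2 mulVf ?gt_eqF.
move=> _ [r' [r'_config r'_unit] <-].
have := r_min _ (config_scale (lt0r_neq0 s_gt0) r'_config).
rewrite gmom_scale ?(ltW s_gt0) // r'_unit mulr1 s2 fpot_scale // => /(_ erefl).
by rewrite -(ler_pM2l s_gt0) mulrA divff ?gt_eqF ?mul1r.
Qed.

Theorem theorem4p2 (R : realType) (N : nat) (hN : (2 <= N)%N)
  (m : 'I_N -> R) (hm : forall i, 0 < m i) (gamma : R) (hgamma : 0 < gamma)
  (lambda : R) (hlambda : 0 < lambda)
  (r : 'I_N -> R * R) (hr : config r)
  (hmin : forall r' : 'I_N -> R * R, config r' ->
     fpot m gamma r + lambda * gmom m r <= fpot m gamma r' + lambda * gmom m r')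
  (phi : 'I_N -> R)
  (hphi : forall i, r i = (nrm2 (r i) * cos (phi i), nrm2 (r i) * sin (phi i))) :
  let omega := Num.sqrt (2 * lambda) in
  (forall t : R, 0 <= t ->
     fpot m gamma (traj r phi omega t) = fpot m gamma r /\
     gmom m (traj r phi omega t) = gmom m r) /\
  fpot m gamma r = Cmin m gamma / Num.sqrt (gmom m r).
Proof.
move=> omega; split.
  by move=> t _; rewrite traj_rotate // fpot_rotate gmom_rotate.
have g_gt0 := gmom_gt0 hN hm hr.
rewrite (@Cmin_level_minimizer _ _ _ _ r) // => [|r' r'_config g_eq].
  by rewrite mulrAC divff ?mul1r // gt_eqF // sqrtr_gt0.
by have := hmin r' r'_config; rewrite g_eq lerD2r.
Qed.
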